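(* Let $S=\{\alpha_i^l: i\in[\![d]\!],\ 1\le l\le k-1\}$. For any coloring $\Gamma$ and $k$-ordering $\Omega$ of $T_{d,k}$ with root $\mathcal T$, the map $g\mapsto g.\mathcal T$ is a graph isomorphism from the Cayley graph $\mathrm{Cay}(G_{d,k};S)$ (vertex set $G_{d,k}$, edges $\{g,sg\}$, $s\in S$) onto the line graph of $T_{d,k}$.
   Context: Fix $d,k\ge1$, $[\![d]\!]=\{0,\dots,d\}$. $G_{d,k}=\langle\alpha_0,\dots,\alpha_d\mid\alpha_i^k=e\rangle$ is the free product of $d+1$ cyclic groups of order $k$. The arboreal complex $T_{d,k}$: start from a single $d$-simplex $\mathcal T$, attach to each of its $(d-1)$-faces $k-1$ new $d$-simplices each using a new vertex, and inductively attach to each $(d-1)$-face created in the previous step $k-1$ new $d$-simplices each using a new vertex; $T_{d,k}$ is the union. The line graph of $T_{d,k}$ has the $d$-cells as vertices, two distinct $d$-cells adjacent iff they share a $(d-1)$-cell. A coloring $\Gamma$ is a map from vertices to $[\![d]\!]$ injective on each $d$-cell, extended to cells by $\Gamma(\sigma)=\{\Gamma(v):v\in\sigma\}$. A $k$-ordering $\Omega$ assigns to each $(d-1)$-cell $\sigma$ a homomorphism $\Omega_\sigma:\mathbb Z/k\mathbb Z\to\mathrm{Sym}(\delta(\sigma))$ with transitive image, $\delta(\sigma)$ the set of $d$-cells containing $\sigma$. Left action on $d$-cells: $\alpha_i^l.\tau=\Omega_\sigma(l).\tau$ where $\sigma$ is the $(d-1)$-face of $\tau$ of color $[\![d]\!]\setminus\{i\}$,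 extended to words letter by letter (right-most first); this is a well-defined action of $G_{d,k}$. *)

From mathcomp Require Import all_boot.
Unset Printing Implicit Defensive.

(* ---------- The arboreal complex T_{d,k} (concrete model) ----------
   A d-cell is encoded by its creation history [p : seq (nat*nat)]:
   [::] is the root simplex T; a step (j,c) means "replace the vertex in
   position j (i.e. attach along the (d-1)-face opposite to it) by a new
   vertex, copy number c (0 <= c < k-1)".  After the first step, the face
   used must be one created at the previous step, i.e. one containing the
   newest vertex, so the dropped position j differs from the previous one. *)

Definition step := (nat * nat)%type.
Definition Cell := seq step.

(* Vertices: [inl j] = j-th vertex of the root simplex, [inr p] = the new
   vertex introduced when creating the d-cell with history p. *)
Definition Vtx := (nat + seq step)%type.

Definition is_cell (d k : nat) (p : Cell) : bool :=
  all (fun s : step => (s.1 <= d) && (s.2 < k.-1)) p &&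
  sorted (fun a b : step => a.1 != b.1) p.

Fixpoint verts_aux (acc : seq step) (vs : seq Vtx) (p : seq step) : seq Vtx :=
  match p with
  | [::] => vs
  | s :: p' =>
      let acc' := rcons acc s in
      verts_aux acc' (set_nth (inl 0) vs s.1 (inr acc')) p'
  end.

Definition verts (d : nat) (p : Cell) : seq Vtx :=
  verts_aux [::] [seq inl i | i <- iota 0 d.+1] p.

Definition root_cell : Cell := [::].

Definition is_facet (d k : nat) (sigma : seq Vtx) : Prop :=
  uniq sigma /\ size sigma = d /\
  exists tau, is_cell d k tau /\ {subset sigma <= verts d tau}.

Definition in_delta (d k : nat) (sigma : seq Vtx) (tau : Cell) : Prop :=
  is_cell d k tau /\ {subset sigma <= verts d tau}.

Definition line_adj (d k : nat) (tau tau' : Cell) : Prop :=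
  tau <> tau' /\
  exists sigma, is_facet d k sigma /\
    {subset sigma <= verts d tau} /\ {subset sigma <= verts d tau'}.

Definition is_coloring (d k : nat) (Gam : Vtx -> 'I_d.+1) : Prop :=
  forall tau, is_cell d k tau -> uniq [seq Gam v | v <- verts d tau].

(* k-orderings: for each (d-1)-cell sigma, Om sigma : nat -> Cell -> Cell
   is a homomorphism Z/kZ -> Sym(delta(sigma)) (given on representatives
   l : nat, factoring through Z/kZ since Om sigma k = id) with transitive
   image; Om only depends on sigma as a vertex set. *)
Definition is_k_ordering (d k : nat) (Om : seq Vtx -> nat -> Cell -> Cell)
  : Prop :=
  forall sigma, is_facet d k sigma ->
    (forall sigma', perm_eq sigma sigma' -> Om sigma' = Om sigma) /\
    (forall l tau, in_delta d k sigma tau -> in_delta d k sigma (Om sigma l tau)) /\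
    (forall tau, in_delta d k sigma tau -> Om sigma 0 tau = tau) /\
    (forall a b tau, in_delta d k sigma tau ->
        Om sigma (a + b) tau = Om sigma a (Om sigma b tau)) /\
    (forall tau, in_delta d k sigma tau -> Om sigma k tau = tau) /\
    (forall tau tau', in_delta d k sigma tau -> in_delta d k sigma tau' ->
        exists l, Om sigma l tau = tau').

Definition face_of_color (d : nat) (Gam : Vtx -> 'I_d.+1) (tau : Cell) (i : nat)
  : seq Vtx := [seq v <- verts d tau | nat_of_ord (Gam v) != i].

(* ---------- The group G_{d,k} (normal forms of the free product) ----------
   An element is a reduced word [:: (i1,l1); ...; (im,lm)] standing for
   alpha_{i1}^{l1} ... alpha_{im}^{lm}, with i <= d, 0 < l < k, and
   consecutive indices distinct. *)
Definition Word := seq (nat * nat).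

Definition is_reduced (d k : nat) (w : Word) : bool :=
  all (fun a : nat * nat => (a.1 <= d) && (0 < a.2 < k)) w &&
  sorted (fun a b : nat * nat => a.1 != b.1) w.

Definition lmul (k : nat) (a : nat * nat) (w : Word) : Word :=
  match w with
  | [::] => [:: a]
  | b :: w' =>
      if a.1 == b.1 then
        (if (a.2 + b.2) %% k == 0 then w' else (a.1, (a.2 + b.2) %% k) :: w')
      else a :: w
  end.

Definition cay_adj (d k : nat) (g h : Word) : Prop :=
  exists i l, i <= d /\ 0 < l < k /\ (h = lmul k (i, l) g \/ g = lmul k (i, l) h).

Definition act1 (d : nat) (Gam : Vtx -> 'I_d.+1)
  (Om : seq Vtx -> nat -> Cell -> Cell) (a : nat * nat) (tau : Cell) : Cell :=
  Om (face_of_color d Gam tau a.1) a.2 tau.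

Definition act (d : nat) (Gam : Vtx -> 'I_d.+1)
  (Om : seq Vtx -> nat -> Cell -> Cell) (g : Word) (tau : Cell) : Cell :=
  foldr (act1 d Gam Om) tau g.

From mathcomp Require Import all_boot zify.

(* A d-cell is identified with its creation history, so the d-cells form a
   rooted tree in which a child differs from its parent in exactly one vertex.
   The d-cells containing a (d-1)-face are one cell and k-1 of its children,
   so |delta(sigma)| = k and the transitive Omega_sigma is simply transitive.
   Hence alpha_i^l (0 < l < k) moves tau to another cell of delta(sigma),
   sigma the face of tau missing colour i; when the newest vertex of tau does
   not have colour i, this is a child of tau whose newest vertex has colour i.
   A reduced word, whose consecutive letters have distinct colours, thus acts
   on the root by walking down the tree one step per letter, and the colour of
   the newest vertex of g.T recovers the first letter of g.  This gives
   injectivity, surjectivity follows by induction on the history, and two cells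
   share a face exactly when one is the image of the other under some
   Omega_sigma(l), i.e. under a letter. *)

Set Implicit Arguments.
Unset Strict Implicit.

Definition pos_bounded (d : nat) (p : seq (nat * nat)) : bool :=
  all (fun s => s.1 <= d) p.

Section Cells.

Variables d k : nat.

Definition cell_vertex (p : Cell) (x : nat) : Vtx := nth (inl 0) (verts d p) x.

Lemma verts_aux_rcons acc vs p s :
  verts_aux acc vs (rcons p s) =
  set_nth (inl 0) (verts_aux acc vs p) s.1 (inr (acc ++ rcons p s)).
Proof.
elim: p acc vs => [|x p IH] acc vs /=; first by rewrite cats1.
by rewrite IH cat_rcons.
Qed.

Lemma verts_rcons p s :
  verts d (rcons p s) = set_nth (inl 0) (verts d p) s.1 (inr (rcons p s)).
Proof. by rewrite /verts verts_aux_rcons. Qed.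

Lemma cell_vertex_rcons p s x :
  cell_vertex (rcons p s) x = if x == s.1 then inr (rcons p s) else cell_vertex p x.
Proof. by rewrite /cell_vertex verts_rcons nth_set_nth. Qed.

Lemma cell_vertex_nil x : cell_vertex [::] x = inl (if x < d.+1 then x else 0).
Proof.
rewrite /cell_vertex /verts; case: ltnP => hx.
  by rewrite (nth_map 0) ?size_iota // nth_iota.
by rewrite nth_default // size_map size_iota.
Qed.

Lemma size_verts p : pos_bounded d p -> size (verts d p) = d.+1.
Proof.
elim/last_ind: p => [|p s IH]; first by rewrite /verts size_map size_iota.
rewrite /pos_bounded all_rcons => /andP [hs hp].
by rewrite verts_rcons size_set_nth IH //; apply/maxn_idPr.
Qed.

Lemma cell_vertex_inr p x q : cell_vertex p x = inr q -> prefix q p.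
Proof.
elim/last_ind: p x => [|p s IH] x; first by rewrite cell_vertex_nil.
rewrite cell_vertex_rcons -cats1; case: eqP => _; first by case=> <-; apply: prefix_refl.
by move/IH; apply: prefix_catl.
Qed.

Lemma cell_vertex_newer p x q : cell_vertex p x = inr q -> size q <= size p.
Proof. by move/cell_vertex_inr/size_prefix. Qed.

Lemma cell_vertex_inj p x y : x < d.+1 -> y < d.+1 ->
  cell_vertex p x = cell_vertex p y -> x = y.
Proof.
elim/last_ind: p x y => [|p s IH] x y hx hy; first by rewrite !cell_vertex_nil hx hy; case.
rewrite !cell_vertex_rcons; case: eqP => [->|_]; case: eqP => [->|_] //; last exact: IH.
- by move/esym/cell_vertex_newer; rewrite size_rcons ltnn.
- by move/cell_vertex_newer; rewrite size_rcons ltnn.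
Qed.

Lemma vertsE p : pos_bounded d p -> verts d p = map (cell_vertex p) (iota 0 d.+1).
Proof. by move=> hp; rewrite -(size_verts hp) -/(mkseq _ _) mkseq_nth. Qed.

Lemma uniq_verts p : pos_bounded d p -> uniq (verts d p).
Proof.
move=> hp; rewrite vertsE // map_inj_in_uniq ?iota_uniq // => x y.
by rewrite !mem_iota => hx hy; apply: cell_vertex_inj.
Qed.

Lemma mem_verts p v : pos_bounded d p ->
  (v \in verts d p) <-> exists2 x, x < d.+1 & cell_vertex p x = v.
Proof.
move=> hp; rewrite vertsE //; split; last by case=> x hx <-; rewrite map_f ?mem_iota.
by case/mapP => x; rewrite mem_iota => hx ->; exists x.
Qed.

Lemma cell_vertex_replaced (p : Cell) s (q : Cell) x : x < d.+1 -> s.1 < d.+1 ->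
  cell_vertex (rcons p s ++ q) x <> cell_vertex p s.1.
Proof.
move=> hx hs; have old r : cell_vertex p s.1 = inr r -> size r <= size p.
  exact: cell_vertex_newer.
elim/last_ind: q => [|q u IH]; rewrite ?cats0 -?rcons_cat cell_vertex_rcons.
  case: eqP => [_ /esym/old|nx /(cell_vertex_inj hx hs) //].
  by rewrite size_rcons ltnn.
case: eqP => // _ /esym/old; rewrite size_rcons size_cat size_rcons; lia.
Qed.

Lemma is_cell_rcons p s : is_cell d k (rcons p s) =
  [&& is_cell d k p, s.1 <= d, s.2 < k.-1 & (p == [::]) || ((last s p).1 != s.1)].
Proof.
rewrite /is_cell all_rcons; case: p => [|x p] /=; first by rewrite andbT !andbA.
rewrite rcons_path.
by case: (s.1 <= d) (s.2 < k.-1) (x.1 <= d) (x.2 < k.-1) (all _ p) (path _ _ p)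
  ((last x p).1 != s.1) => [] [] [] [] [] [] [].
Qed.

Lemma cell_pos_bounded p : is_cell d k p -> pos_bounded d p.
Proof. by case/andP => h _; apply: sub_all h => s /andP []. Qed.

Lemma cell_across_face tau rho j : is_cell d k tau -> is_cell d k rho -> j < d.+1 ->
  (forall p s, tau = rcons p s -> s.1 != j) ->
  (forall x, x < d.+1 -> x != j -> cell_vertex tau x \in verts d rho) -> rho <> tau ->
  exists c, rho = rcons tau (j, c).
Proof.
move=> ht hr hj hlast hin hne; have hpr := cell_pos_bounded hr.
have pos_rho u : u \in rho -> u.1 < d.+1 by move/(allP hpr).
have /prefixP [r er] : prefix tau rho.
  case/lastP: tau ht hlast hin {hne} => [|p t] ht hlast hin; first exact: prefix0s.
  have ht1 : t.1 < d.+1 by move: ht; rewrite is_cell_rcons ltnS => /and4P [].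
  have := hin t.1 ht1 (hlast _ _ erefl); rewrite cell_vertex_rcons eqxx.
  by case/(mem_verts _ hpr) => y _ /cell_vertex_inr.
case: r er => [|u r] er; first by case: hne; rewrite er cats0.
have hu : u.1 < d.+1 by apply: pos_rho; rewrite er mem_cat mem_head orbT.
have uj : u.1 = j.
  apply/eqP; apply: contraT => ne; case/(mem_verts _ hpr): (hin _ hu ne) => y hy.
  by rewrite er -cat_rcons => /(cell_vertex_replaced hy hu).
case: r er => [|u2 r] er; first by exists u.2; rewrite er cats1 -uj; case: u {hu uj er}.
have hu2 : u2.1 < d.+1 by apply: pos_rho; rewrite er mem_cat !inE eqxx !orbT.
have ne12 : u.1 != u2.1 by move: hr => /andP [_]; rewrite er => /cat_sorted2 [_] /andP [].
have ne2j : u2.1 != j by rewrite -uj eq_sym.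
case/(mem_verts _ hpr): (hin _ hu2 ne2j) => y hy.
rewrite (_ : cell_vertex tau u2.1 = cell_vertex (rcons tau u) u2.1); last first.
  by rewrite cell_vertex_rcons eq_sym (negbTE ne12).
by rewrite er -!cat_rcons => /(cell_vertex_replaced hy hu2).
Qed.

Lemma face_base_cell tau j : is_cell d k tau -> j < d.+1 ->
  exists b, [/\ is_cell d k b, (forall x, x != j -> cell_vertex b x = cell_vertex tau x) &
     forall c, c < k.-1 -> is_cell d k (rcons b (j, c))].
Proof.
move=> ht hj; case/lastP: tau ht => [|p t] ht.
  by exists [::]; split=> // c hc; rewrite is_cell_rcons /= -ltnS hj hc.
move: (ht); rewrite is_cell_rcons => /and4P [hp htd htk hlast].
case: (eqVneq t.1 j) => etj; last first.
  by exists (rcons p t); split=> // c hc; rewrite is_cell_rcons ht -ltnS hj hc last_rcons etj orbT.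
exists p; split=> // [x hx|c hc]; first by rewrite cell_vertex_rcons etj (negbTE hx).
rewrite is_cell_rcons hp -ltnS hj hc /=.
by case: p {ht hp} hlast => //= a p; rewrite etj.
Qed.

Lemma line_adj_sym tau tau' : line_adj d k tau tau' -> line_adj d k tau' tau.
Proof. by case=> ne [sigma [hf [s1 s2]]]; split; [move/esym | exists sigma]. Qed.

End Cells.

Section Coloring.

Variables (d k : nat) (Gam : Vtx -> 'I_d.+1).
Hypothesis hG : is_coloring d k Gam.

Lemma coloring_inj tau x y : is_cell d k tau -> x < d.+1 -> y < d.+1 ->
  Gam (cell_vertex d tau x) = Gam (cell_vertex d tau y) -> x = y.
Proof.
move=> ht hx hy e; have := hG ht; rewrite (vertsE (cell_pos_bounded ht)) -map_comp.
move/nth_uniq; rewrite size_map size_iota => /(_ ord0 x y hx hy).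
by rewrite !(nth_map 0) ?size_iota // !nth_iota //= e eqxx => /esym/eqP.
Qed.

Lemma coloring_surj tau i : is_cell d k tau -> i < d.+1 ->
  exists2 j, j < d.+1 & Gam (cell_vertex d tau j) = i :> nat.
Proof.
move=> ht hi; have hp := cell_pos_bounded ht.
have sz : size (enum 'I_d.+1) <= size [seq Gam v | v <- verts d tau].
  by rewrite size_enum_ord size_map size_verts.
have [_ /(_ (Ordinal hi))] := uniq_min_size (hG ht) (fun c _ => mem_enum _ c) sz.
rewrite mem_enum => /mapP [v /(mem_verts _ hp) [j hj <-] ei].
by exists j; rewrite // -ei.
Qed.

Lemma face_of_colorE tau i j : is_cell d k tau -> j < d.+1 ->
  Gam (cell_vertex d tau j) = i :> nat ->
  face_of_color d Gam tau i = map (cell_vertex d tau) (filter (predC1 j) (iota 0 d.+1)).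
Proof.
move=> ht hj hc; rewrite /face_of_color (vertsE (cell_pos_bounded ht)) filter_map.
congr map; apply: eq_in_filter => x; rewrite mem_iota /= => hx.
case: (eqVneq x j) => [->|ne]; first by rewrite hc eqxx.
apply/eqP => e; case/eqP: ne; apply: coloring_inj ht hx hj _.
by apply: val_inj; rewrite /= e hc.
Qed.

Lemma agree_face_of_color_sub tau rho i j : is_cell d k tau -> is_cell d k rho ->
  j < d.+1 -> Gam (cell_vertex d tau j) = i :> nat ->
  (forall x, x != j -> cell_vertex d rho x = cell_vertex d tau x) ->
  {subset face_of_color d Gam tau i <= verts d rho}.
Proof.
move=> ht hr hj hc hagree v; rewrite (face_of_colorE ht hj hc) => /mapP [x].
rewrite mem_filter mem_iota /= => /andP [hxj hx] ->.
by apply/(mem_verts _ (cell_pos_bounded hr)); exists x; rewrite ?hagree.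
Qed.

Lemma size_face_of_color tau i : is_cell d k tau -> i < d.+1 ->
  size (face_of_color d Gam tau i) = d.
Proof.
move=> ht hi; have [j hj hc] := coloring_surj ht hi.
rewrite (face_of_colorE ht hj hc) size_map -rem_filter ?iota_uniq //.
by rewrite size_rem ?mem_iota // size_iota.
Qed.

Lemma uniq_face_of_color tau i : is_cell d k tau -> uniq (face_of_color d Gam tau i).
Proof. by move=> ht; apply/filter_uniq/uniq_verts; apply: cell_pos_bounded ht. Qed.

Lemma face_of_color_sub tau i : {subset face_of_color d Gam tau i <= verts d tau}.
Proof. by move=> v; rewrite mem_filter => /andP []. Qed.

Lemma face_of_color_facet tau i : is_cell d k tau -> i < d.+1 ->
  is_facet d k (face_of_color d Gam tau i).
Proof.
move=> ht hi; split; first exact: uniq_face_of_color.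
by split; [exact: size_face_of_color | exists tau; split=> //; apply: face_of_color_sub].
Qed.

Lemma face_of_color_delta tau i : is_cell d k tau ->
  in_delta d k (face_of_color d Gam tau i) tau.
Proof. by move=> ht; split=> //; apply: face_of_color_sub. Qed.

Lemma face_of_color_perm tau tau' i : is_cell d k tau -> is_cell d k tau' -> i < d.+1 ->
  {subset face_of_color d Gam tau i <= verts d tau'} ->
  perm_eq (face_of_color d Gam tau i) (face_of_color d Gam tau' i).
Proof.
move=> ht ht' hi hs; set f := face_of_color d Gam tau i.
have sub : {subset f <= face_of_color d Gam tau' i}.
  by move=> v hv; rewrite mem_filter hs // andbT; move: hv; rewrite mem_filter => /andP [].
have sz : size (face_of_color d Gam tau' i) <= size f.
  by rewrite !size_face_of_color.
apply: uniq_perm; rewrite ?uniq_face_of_color //.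
exact: (uniq_min_size (uniq_face_of_color i ht) sub sz).2.
Qed.

Lemma facet_is_face tau sigma : is_cell d k tau ->
  uniq sigma -> size sigma = d -> {subset sigma <= verts d tau} ->
  exists2 i, i < d.+1 & perm_eq sigma (face_of_color d Gam tau i).
Proof.
move=> ht hu hsz hs; have hp := cell_pos_bounded ht.
have [v hv hn] : exists2 v, v \in verts d tau & v \notin sigma.
  apply/hasP; apply: contraT => /hasPn hall.
  have := uniq_leq_size (uniq_verts hp) (fun v hv => negbNE (hall v hv)).
  by rewrite size_verts // hsz ltnn.
case/(mem_verts _ hp): hv hn => j hj <- hn.
exists (Gam (cell_vertex d tau j)) => //.
have sub : {subset sigma <= face_of_color d Gam tau (Gam (cell_vertex d tau j))}.
  move=> w hw; rewrite mem_filter hs // andbT.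
  case/(mem_verts _ hp): (hs _ hw) => x hx ex.
  apply/eqP => /val_inj; rewrite -ex => /(coloring_inj ht hx hj) exj.
  by move: hn; rewrite -exj ex hw.
have sz : size (face_of_color d Gam tau (Gam (cell_vertex d tau j))) <= size sigma.
  by rewrite size_face_of_color // hsz.
apply: uniq_perm; rewrite ?uniq_face_of_color //.
exact: (uniq_min_size hu sub sz).2.
Qed.

End Coloring.

Section Ordering.

Variables (d k : nat) (Gam : Vtx -> 'I_d.+1) (Om : seq Vtx -> nat -> Cell -> Cell).
Hypothesis hk : 0 < k.
Hypothesis hG : is_coloring d k Gam.
Hypothesis hO : is_k_ordering d k Om.

Lemma Om_mod sigma tau l : is_facet d k sigma -> in_delta d k sigma tau ->
  Om sigma l tau = Om sigma (l %% k) tau.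
Proof.
move=> hf ht; have [_ [hdel [h0 [hadd [hkk _]]]]] := hO hf.
have Om_mulk q t : in_delta d k sigma t -> Om sigma (q * k) t = t.
  by elim: q t => [|q IH] t hdt; rewrite ?mul0n ?h0 // mulSn hadd ?IH ?hkk.
by rewrite {1}(divn_eq l k) hadd ?Om_mulk //; apply: hdel.
Qed.

Lemma face_delta_cells tau i : is_cell d k tau -> i < d.+1 ->
  exists2 cs, uniq cs /\ size cs = k &
    {in cs, forall c, in_delta d k (face_of_color d Gam tau i) c}.
Proof.
move=> ht hi; have [j hj hc] := coloring_surj hG ht hi.
have [b [hb hbx hbc]] := face_base_cell ht hj.
exists (b :: [seq rcons b (j, c) | c <- iota 0 k.-1]).
  split; last by rewrite /= size_map size_iota prednK.
  rewrite /= map_inj_uniq ?iota_uniq ?andbT; last by move=> c c' /rcons_inj [->].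
  apply/mapP => [[c _ /(congr1 size)]]; rewrite size_rcons => /eqP.
  by rewrite ltn_eqF.
move=> c hcs.
have [hcc hagree] : is_cell d k c /\
    forall x, x != j -> cell_vertex d c x = cell_vertex d tau x.
  case/predU1P: hcs => [-> //|/mapP [c' hc' ->]].
  split; first by apply: hbc; move: hc'; rewrite mem_iota.
  by move=> x hx; rewrite cell_vertex_rcons (negbTE hx) hbx.
by split=> //; apply: (agree_face_of_color_sub hG ht hcc hj hc).
Qed.

(* Transitivity on the k cells of delta(sigma) leaves no room for a
   nontrivial stabiliser. *)
Lemma Om_face_inj tau0 i tau l1 l2 : is_cell d k tau0 -> i < d.+1 ->
  in_delta d k (face_of_color d Gam tau0 i) tau -> l1 < k -> l2 < k ->
  Om (face_of_color d Gam tau0 i) l1 tau = Om (face_of_color d Gam tau0 i) l2 tau ->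
  l1 = l2.
Proof.
move=> ht0 hi ht hl1 hl2; set sigma := face_of_color _ _ _ _.
have hf := face_of_color_facet hG ht0 hi.
have [_ [_ [_ [_ [_ htr]]]]] := hO hf.
have [cs [ucs szcs] incs] := face_delta_cells ht0 hi.
have sub : {subset cs <= [seq Om sigma l tau | l <- iota 0 k]}.
  move=> c /incs /(htr _ _ ht) [l <-]; apply/mapP; exists (l %% k).
    by rewrite mem_iota ltn_pmod.
  exact: Om_mod.
have := leq_size_uniq ucs sub; rewrite size_map size_iota szcs leqnn => /(_ isT).
move/nth_uniq; rewrite size_map size_iota => /(_ tau l1 l2 hl1 hl2).
by rewrite !(nth_map 0) ?size_iota // !nth_iota // !add0n => uq e; apply/eqP; rewrite -uq e.
Qed.

End Ordering.

Section Words.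

Variables d k : nat.

Lemma is_reduced_cons a w : is_reduced d k (a :: w) =
  [&& a.1 <= d, 0 < a.2 < k, is_reduced d k w &
     (if w is b :: _ then a.1 != b.1 else true)].
Proof.
rewrite /is_reduced /=; case: w => [|b w] /=; first by rewrite !andbT.
by case: (a.1 <= d) (0 < a.2) (a.2 < k) (b.1 <= d) (0 < b.2) (b.2 < k) (all _ w)
  (a.1 != b.1) (path _ b w) => [] [] [] [] [] [] [] [] [].
Qed.

Lemma reduced_pos_bounded g : is_reduced d k g -> pos_bounded d g.
Proof. by case/andP => h _; apply: sub_all h => a /andP []. Qed.

Lemma lmul_reduced g i l : is_reduced d k g -> i <= d -> 0 < l < k ->
  is_reduced d k (lmul k (i, l) g).
Proof.
move=> hg hi hl; case: g hg => [|b g]; first by rewrite is_reduced_cons /= hi hl.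
rewrite /= is_reduced_cons => /and4P [hb1 hb2 hg hs].
case: eqP => [eb|nb]; last by rewrite !is_reduced_cons /= hi hl hb1 hb2 hg hs; apply/eqP.
case: eqP => // /eqP nz; rewrite is_reduced_cons /= hi hg lt0n nz ltn_pmod //=.
  by case: g {hg} hs => // c g; rewrite eb.
by case/andP: hl => h1; apply: leq_ltn_trans.
Qed.

End Words.

Section Action.

Variables (d k : nat) (Gam : Vtx -> 'I_d.+1) (Om : seq Vtx -> nat -> Cell -> Cell).
Hypothesis hk : 0 < k.
Hypothesis hG : is_coloring d k Gam.
Hypothesis hO : is_k_ordering d k Om.

Local Notation act1 := (act1 d Gam Om).
Local Notation act := (act d Gam Om).

Lemma act1_delta tau i l : is_cell d k tau -> i < d.+1 ->
  in_delta d k (face_of_color d Gam tau i) (act1 (i, l) tau).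
Proof.
move=> ht hi; have [_ [hdel _]] := hO (face_of_color_facet hG ht hi).
exact/hdel/face_of_color_delta.
Qed.

Lemma act1_cell tau a : is_cell d k tau -> a.1 < d.+1 -> is_cell d k (act1 a tau).
Proof. by case: a => i l ht hi; case: (act1_delta l ht hi). Qed.

Lemma act_cell g tau : is_cell d k tau -> pos_bounded d g -> is_cell d k (act g tau).
Proof. by move=> ht; elim: g => [|a g IH] //= /andP [ha /IH hg]; apply: act1_cell hg ha. Qed.

Lemma act1_add tau i a b : is_cell d k tau -> i < d.+1 ->
  act1 (i, a) (act1 (i, b) tau) = act1 (i, a + b) tau.
Proof.
move=> ht hi; have hd := act1_delta b ht hi; rewrite /act1 /=.
have [hp [_ [_ [hadd _]]]] := hO (face_of_color_facet hG ht hi).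
rewrite (hp (face_of_color d Gam (act1 (i, b) tau) i)); last first.
  by case: hd => ht' hs; apply: face_of_color_perm ht ht' hi hs.
by rewrite hadd //; apply: face_of_color_delta.
Qed.

Lemma act1_mod tau i l : is_cell d k tau -> i < d.+1 ->
  act1 (i, l) tau = act1 (i, l %% k) tau.
Proof.
move=> ht hi; rewrite /act1 /= (Om_mod hO l (face_of_color_facet hG ht hi)) //.
exact: face_of_color_delta.
Qed.

Lemma act1_0 tau i : is_cell d k tau -> i < d.+1 -> act1 (i, 0) tau = tau.
Proof.
move=> ht hi; have [_ [_ [h0 _]]] := hO (face_of_color_facet hG ht hi).
exact/h0/face_of_color_delta.
Qed.

Lemma act_lmul g i l tau : is_cell d k tau -> pos_bounded d g -> i < d.+1 ->
  act (lmul k (i, l) g) tau = act1 (i, l) (act g tau).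
Proof.
move=> ht; case: g => [|[b1 b2] g] //= /andP [_ hg] hi.
case: eqP => //= <-; have ht' := act_cell ht hg.
rewrite act1_add // [RHS]act1_mod //.
by case: eqP => [->|_]; rewrite ?act1_0.
Qed.

Lemma act1_neq tau i l : is_cell d k tau -> i < d.+1 -> 0 < l < k ->
  act1 (i, l) tau <> tau.
Proof.
move=> ht hi /andP [l_gt0 l_ltk] e; have hd := face_of_color_delta Gam i ht.
have := Om_face_inj hk hG hO ht hi hd l_ltk hk (etrans e (esym (act1_0 ht hi))).
by move=> l0; rewrite l0 in l_gt0.
Qed.

Lemma act1_extends tau i l : is_cell d k tau -> i < d.+1 -> 0 < l < k ->
  (tau != [::] -> Gam (inr tau) != i :> nat) ->
  exists2 s, act1 (i, l) tau = rcons tau s & Gam (inr (act1 (i, l) tau)) = i :> nat.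
Proof.
move=> ht hi hl hnew; have [j hj hcj] := coloring_surj hG ht hi.
have [ht' hsub] := act1_delta l ht hi.
have [c ec] : exists c, act1 (i, l) tau = rcons tau (j, c).
  apply: (cell_across_face ht ht' hj _ _ (act1_neq ht hi hl)).
    move=> p s etau; apply/eqP => sj.
    have tau_ne0 : tau != [::] by rewrite etau -size_eq0 size_rcons.
    have vj : cell_vertex d tau j = inr tau.
      by rewrite {1}etau cell_vertex_rcons sj eqxx -etau.
    by move: (hnew tau_ne0); rewrite -hcj vj eqxx.
  move=> x hx hxj; apply: hsub; rewrite (face_of_colorE hG ht hj hcj).
  by rewrite map_f // mem_filter mem_iota /= hxj hx.
exists (j, c); rewrite // ec; rewrite ec in ht'.
have [j' hj' hcj'] := coloring_surj hG ht' hi.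
have ej : j' = j.
  apply/eqP; apply: contraT => ne; move: hcj'; rewrite cell_vertex_rcons /= (negbTE ne) -hcj.
  by move=> /val_inj /(coloring_inj hG ht hj' hj) ej; rewrite ej eqxx in ne.
by move: hcj'; rewrite ej cell_vertex_rcons /= eqxx.
Qed.

Lemma act_root_cons i l g : is_reduced d k ((i, l) :: g) ->
  exists2 s, act ((i, l) :: g) root_cell = rcons (act g root_cell) s &
    Gam (inr (act ((i, l) :: g) root_cell)) = i :> nat.
Proof.
elim: g i l => [|[i' l'] g IH] i l; rewrite is_reduced_cons => /and4P [hi hl hg hii'].
  exact: act1_extends.
apply: act1_extends; rewrite ?ltnS //.
  by apply: act_cell (reduced_pos_bounded hg).
by have [_ _ ->] := IH _ _ hg; rewrite [i' == _]eq_sym.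
Qed.

Lemma act_root_inj g h : is_reduced d k g -> is_reduced d k h ->
  act g root_cell = act h root_cell -> g = h.
Proof.
elim: g h => [|[i l] g IH] [|[i' l'] h] hg hh // e.
- have [s es _] := act_root_cons hh; move: e; rewrite es => /(congr1 size).
  by rewrite size_rcons.
- have [s es _] := act_root_cons hg; move: e; rewrite es => /(congr1 size).
  by rewrite size_rcons.
have [s es ci] := act_root_cons hg; have [s' es' ci'] := act_root_cons hh.
have ii' : i = i' by rewrite -ci e ci'.
move: hg hh; rewrite !is_reduced_cons => /and4P [hi /andP [_ hl] hg _].
move=> /and4P [_ /andP [_ hl'] hh _].
have egh : act g root_cell = act h root_cell by move: e; rewrite es es' => /rcons_inj [].
have ht : is_cell d k (act g root_cell) by apply: act_cell (reduced_pos_bounded hg).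
have ll' : l = l'.
  apply: (Om_face_inj hk hG hO ht hi (face_of_color_delta Gam i ht) hl hl').
  by move: e => /=; rewrite -ii' -egh.
by rewrite -ii' ll' (IH h hg hh egh).
Qed.

Lemma act_root_surj tau : is_cell d k tau ->
  exists2 g, is_reduced d k g & act g root_cell = tau.
Proof.
elim/last_ind: tau => [|tau s IH] hts; first by exists [::].
move: (hts); rewrite is_cell_rcons => /and4P [ht hsd hsk hlast].
have [g hg eg] := IH ht.
have hj : s.1 < d.+1 by rewrite ltnS.
set i := nat_of_ord (Gam (cell_vertex d tau s.1)).
have hi : i < d.+1 := ltn_ord _.
have hd : in_delta d k (face_of_color d Gam tau i) (rcons tau s).
  split=> //; apply: (agree_face_of_color_sub hG ht hts hj erefl) => x hx.
  by rewrite cell_vertex_rcons (negbTE hx).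
have [_ [_ [_ [_ [_ htr]]]]] := hO (face_of_color_facet hG ht hi).
have [l el] := htr _ _ (face_of_color_delta Gam i ht) hd.
have {}el : act1 (i, l %% k) tau = rcons tau s by rewrite -act1_mod.
have l_gt0 : 0 < l %% k.
  rewrite lt0n; apply/eqP => l0; move: el; rewrite l0 act1_0 // => /(congr1 size)/eqP.
  by rewrite size_rcons ltn_eqF.
exists ((i, l %% k) :: g); last by rewrite /= eg.
rewrite is_reduced_cons /= -ltnS hi l_gt0 ltn_pmod //= hg.
case: g hg eg => // [[i' l'] g] hg eg.
have [s' es' ci'] := act_root_cons hg; rewrite eg in es' ci'.
apply/eqP => /= ii'; rewrite /= in ii'.
have hs' : s'.1 < d.+1 by move: ht; rewrite es' is_cell_rcons ltnS => /and4P [].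
have vs' : cell_vertex d tau s'.1 = inr tau by rewrite {1}es' cell_vertex_rcons eqxx -es'.
have e1 : s'.1 = s.1.
  by apply: (coloring_inj hG ht hs' hj); apply: val_inj; rewrite /= vs' ci' -ii'.
by move: hlast; rewrite es' last_rcons -size_eq0 size_rcons /= e1 eqxx.
Qed.

Lemma act1_line_adj tau i l : is_cell d k tau -> i < d.+1 -> 0 < l < k ->
  line_adj d k tau (act1 (i, l) tau).
Proof.
move=> ht hi hl; have [ht' hs'] := act1_delta l ht hi.
split; first by move/esym; apply: act1_neq.
exists (face_of_color d Gam tau i); split; first exact: face_of_color_facet.
by split=> //; apply: face_of_color_sub.
Qed.

Lemma cay_adj_line_adj g h : is_reduced d k g -> is_reduced d k h ->
  cay_adj d k g h -> line_adj d k (act g root_cell) (act h root_cell).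
Proof.
have lmul_adj g' i l : is_reduced d k g' -> i <= d -> 0 < l < k ->
    line_adj d k (act g' root_cell) (act (lmul k (i, l) g') root_cell).
  move=> hg' hi hl; have hp := reduced_pos_bounded hg'.
  by rewrite act_lmul //; apply: act1_line_adj => //; apply: act_cell.
move=> hg hh [i [l [hi [hl [->|->]]]]]; last apply: line_adj_sym; exact: lmul_adj.
Qed.

Lemma line_adj_cay_adj g h : is_reduced d k g -> is_reduced d k h ->
  line_adj d k (act g root_cell) (act h root_cell) -> cay_adj d k g h.
Proof.
move=> hg hh [ne [sigma [hf [s1 s2]]]].
have ht : is_cell d k (act g root_cell) by apply: act_cell (reduced_pos_bounded hg).
have ht' : is_cell d k (act h root_cell) by apply: act_cell (reduced_pos_bounded hh).
have [hu [hsz _]] := hf.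
have [i hi hpe] := facet_is_face hG ht hu hsz s1.
have [hp [_ [_ [_ [_ htr]]]]] := hO hf.
have [l el] := htr _ _ (conj ht s1) (conj ht' s2).
have e : act1 (i, l %% k) (act g root_cell) = act h root_cell.
  by rewrite -act1_mod // /act1 /= (hp _ hpe).
have hl : 0 < l %% k < k.
  by rewrite ltn_pmod // andbT lt0n; apply/eqP => l0; apply: ne; rewrite -e l0 act1_0.
exists i, (l %% k); do 2!split=> //; left.
apply: act_root_inj hh (lmul_reduced hg _ hl) _; first by rewrite -ltnS.
by rewrite act_lmul // (reduced_pos_bounded hg).
Qed.

End Action.

Theorem corollary5 (d k : nat) (hd : 1 <= d) (hk : 1 <= k)
  (Gam : Vtx -> 'I_d.+1) (Om : seq Vtx -> nat -> Cell -> Cell) :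
  is_coloring d k Gam -> is_k_ordering d k Om ->
  let phi := fun g => act d Gam Om g root_cell in
  [/\ (forall g, is_reduced d k g -> is_cell d k (phi g)),
      (forall g h, is_reduced d k g -> is_reduced d k h -> phi g = phi h -> g = h),
      (forall tau, is_cell d k tau -> exists2 g, is_reduced d k g & phi g = tau)
    & (forall g h, is_reduced d k g -> is_reduced d k h ->
         cay_adj d k g h <-> line_adj d k (phi g) (phi h))].
Proof.
move=> hG hO phi; split.
- by move=> g /reduced_pos_bounded; apply: act_cell.
- exact: act_root_inj.
- exact: act_root_surj.
- by move=> g h hg hh; split; [apply: cay_adj_line_adj | apply: line_adj_cay_adj].
Qed.
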